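(* Let $r,s\ge0$, $\Delta=(v(y_1),\dots,v(y_n))$, $F\subset\{1,\dots,n\}$ with $r+2s+|F|=|\Delta|-1$, and let $\mathcal{P}$ be a collection of conditions (points $P_1,\dots,P_{r+s}$ and lines $Q_j$, $j\in F$) in general position for $\mathrm{ev}_F$ on the closure of refined descendant curves and for the tropical descendant count below. Let $\alpha=(\alpha_1,\alpha_2,\dots)$ with $\alpha_i=\#\{j\in F: w(y_j)=i\}$, $I^\alpha=\prod_i i^{\alpha_i}$, $O_f=\{i\in F: w(y_i)\text{ odd}\}$, $O_n=\{i\notin F: w(y_i)\text{ odd}\}$. Then $$N^{desc}_{(r,s)}(1,\Delta,F,\mathcal{P})=\frac{\prod_{i\in O_f}w(y_i)}{\prod_{i\in O_n}w(y_i)}\;I^\alpha\;\widetilde N^{\mathrm{trop}}_{\Delta,(r,s,0,0,\dots)}(\alpha).$$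
   Context: Curves. An $(r,s)$-marked curve of degree $\Delta$ is $C=(\Gamma,h,x_1,\dots,x_{r+s})$ with $\Gamma$ a metric graph whose components are trees, $h:\Gamma\to\mathbb{R}^2$ continuous, affine with integral direction vectors on edges, balanced at vertices; $x_1,\dots,x_r$ (real) and $x_{r+1},\dots,x_{r+s}$ (complex) are contracted unbounded edges (markings), the other unbounded edges $y_1,\dots,y_n$ (labeled ends) have outward direction vectors $\Delta=(v(y_1),\dots,v(y_n))$. Weight $w(e)$ = gcd of coordinates of the direction vector. Mikhalkin multiplicity of a vertex with exactly three non-contracted edges of direction vectors $u,v,w$: $a=|\det(u,v)|$. $\mathcal{M}_{(r,s)}(\Delta)$ is the polyhedral complex of connected such curves. $\mathrm{ev}_F(C)=(h(x_1),\dots,h(x_{r+s}),(h(y_i))_{i\in F})\in(\mathbb{R}^2)^{r+s}\times\prod_{i\in F}\mathbb{R}^2/\langle v(y_i)\rangle$; general position means avoiding images of cells whose image has dimension $<2(r+s)+|F|$. $G(\Delta,F)$: permutations of $\{1,\dots,n\}$ fixing $F$ pointwise and preserving $v(y_i)$. Unoriented refined broccoli curve: vertices of types (I') 3-valent with real marking, $m_V(y)=1$; (II') 3-valent unmarked, $m_V(y)=\frac{y^{a/2}-y^{-a/2}}{y^{1/2}-y^{-1/2}}$; (III') 4-valent with complex marking, $m_V(y)=\frac{y^{a/2}+y^{-a/2}}{y^{1/2}+y^{-1/2}}$. End factors: $m_{y_i}(y)=\frac{y^{w(y_i)/2}+(-1)^{w(y_i)}y^{-w(y_i)/2}}{y^{1/2}+(-1)^{w(y_i)}y^{-1/2}}$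 for $i\in F$ and $m_{y_i}(y)=\frac{y^{w(y_i)/2}-(-1)^{w(y_i)}y^{-w(y_i)/2}}{w(y_i)(y^{1/2}-(-1)^{w(y_i)}y^{-1/2})}$ for $i\notin F$; $m_C(y)=\prod_i m_{y_i}(y)\prod_V m_V(y)$. Refined descendant curve: a curve in $\mathcal{M}_{(r,s)}(\Delta)$ whose real markings are each adjacent to a 3-valent vertex of $\Gamma$ and whose complex markings are each adjacent to a 4-valent vertex of $\Gamma$; for conditions in general position these coincide with the unoriented refined broccoli curves through them. $N^{desc}_{(r,s)}(y,\Delta,F,\mathcal{P})=\frac{1}{|G(\Delta,F)|}\sum_C m_C(y)$ over refined descendant curves $C$ with $\mathrm{ev}_F(C)=\mathcal P$. Tropical descendant invariant: with $m=r+s$ markings and $\mathbf{k}=(r,s,0,\dots)$, $\widetilde N^{\mathrm{trop}}_{\Delta,\mathbf{k}}(\alpha)=\frac{1}{I^\alpha}\frac{1}{|G(\Delta,F)|}\sum_C m^{desc}_C$, where the sum runs over connected rational $m$-marked tropical curves $C$ of degree $\Delta$ (all ends labeled) with $h(x_i)=P_i$, with $x_1,\dots,x_r$ adjacent to 3-valent vertices and $x_{r+1},\dots,x_{r+s}$ adjacent to 4-valent vertices of $\Gamma$, with $h(y_j)\in Q_j$ for $j\in F$, and all vertices not adjacent to a marking 3-valent; and $m^{desc}_C$ is the product of the Mikhalkin multiplicities of the 3-valent vertices not adjacent to a marking. *)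

From HB Require Import structures.
From mathcomp Require Import all_boot all_order all_algebra all_fingroup fraction.
From Stdlib Require List.
Set Implicit Arguments. Unset Strict Implicit. Unset Printing Implicit Defensive.
Import Order.TTheory GRing.Theory Num.Theory.
Local Open Scope ring_scope.

Definition ivec := (int * int)%type.
Definition idet (u v : ivec) : int := u.1 * v.2 - u.2 * v.1.
Definition iweight (u : ivec) : nat := gcdn `|u.1|%N `|u.2|%N.

(* Parametrized rational tropical curves in R^2 (labelled, marked).    *)
(* Vertices 'I_nv, bounded edges 'I_nb (edge e goes from csrc e to      *)
(* ctgt e, with integral direction vector cdir e and length clen e, so  *)
(* that h(ctgt e) = h(csrc e) + clen e * cdir e).  The marking x_i      *)
(* (a contracted end) is attached at vertex cmk i, the labelled end y_j *)
(* (direction Delta j) at vertex cen j.  cpos v = h(v).                 *)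
Record curve (R : Type) (m n : nat) := Curve {
  nv : nat;
  nb : nat;
  csrc : 'I_nb -> 'I_nv;
  ctgt : 'I_nb -> 'I_nv;
  cdir : 'I_nb -> ivec;
  clen : 'I_nb -> R;
  cpos : 'I_nv -> R * R;
  cmk : 'I_m -> 'I_nv;
  cen : 'I_n -> 'I_nv
}.
Arguments nv {R m n} _.
Arguments nb {R m n} _.
Arguments csrc {R m n} _ _.
Arguments ctgt {R m n} _ _.
Arguments cdir {R m n} _ _.
Arguments clen {R m n} _ _.
Arguments cpos {R m n} _ _.
Arguments cmk {R m n} _ _.
Arguments cen {R m n} _ _.

Section Tropical.
Variable R : realFieldType.
Variables (r s n : nat).
Local Notation m := (r + s)%N.
Variable Delta : 'I_n -> ivec.
Variable F : {set 'I_n}.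

Implicit Type C : curve R m n.

Definition adj C : rel 'I_(nv C) := fun u v =>
  [exists e, ((csrc C e == u) && (ctgt C e == v)) || ((csrc C e == v) && (ctgt C e == u))].

Definition valence C (v : 'I_(nv C)) : nat :=
  (#|[set e | csrc C e == v]| + #|[set e | ctgt C e == v]|
   + #|[set j | cen C j == v]| + #|[set i | cmk C i == v]|)%N.

Definition out_dirs C (v : 'I_(nv C)) : seq ivec :=
  [seq cdir C e | e <- enum 'I_(nb C) & csrc C e == v]
  ++ [seq (- (cdir C e).1, - (cdir C e).2) | e <- enum 'I_(nb C) & ctgt C e == v]
  ++ [seq Delta j | j <- enum 'I_n & cen C j == v].

Definition vsum (l : seq ivec) : ivec :=
  foldr (fun u acc => (u.1 + acc.1, u.2 + acc.2)) (0, 0) l.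

Definition is_curve C : Prop :=
  [/\ nv C = (nb C).+1 /\
      (forall u v : 'I_(nv C), connect (@adj C) u v),
      (forall e, 0 < clen C e),
      (forall e, cpos C (ctgt C e) =
                 ((cpos C (csrc C e)).1 + clen C e * ((cdir C e).1)%:~R,
                  (cpos C (csrc C e)).2 + clen C e * ((cdir C e).2)%:~R)),
      (forall v : 'I_(nv C), vsum (out_dirs v) = (0, 0)) &
      (forall v : 'I_(nv C), 3 <= valence v)%N].

Definition curve_iso C C' : Prop :=
  exists (sg : 'I_(nv C) -> 'I_(nv C')) (tau : 'I_(nb C) -> 'I_(nb C')),
    [/\ bijective sg /\ bijective tau,
        (forall v, cpos C' (sg v) = cpos C v),
        (forall i, cmk C' i = sg (cmk C i)),
        (forall j, cen C' j = sg (cen C j)) &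
        (forall e, clen C' (tau e) = clen C e /\
           ((csrc C' (tau e) = sg (csrc C e) /\ ctgt C' (tau e) = sg (ctgt C e)
             /\ cdir C' (tau e) = cdir C e) \/
            (csrc C' (tau e) = sg (ctgt C e) /\ ctgt C' (tau e) = sg (csrc C e)
             /\ cdir C' (tau e) = (- (cdir C e).1, - (cdir C e).2))))].

Definition is_real_mk (i : 'I_m) : bool := (i < r)%N.

Definition has_real_mk C (v : 'I_(nv C)) : bool :=
  [exists i, is_real_mk i && (cmk C i == v)].
Definition has_cplx_mk C (v : 'I_(nv C)) : bool :=
  [exists i, ~~ is_real_mk i && (cmk C i == v)].
Definition has_mk C (v : 'I_(nv C)) : bool := [exists i, cmk C i == v].

Definition refined_desc C : Prop :=
  forall i : 'I_m, valence (cmk C i) = (if is_real_mk i then 3 else 4)%N.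

Definition trop_desc C : Prop :=
  refined_desc C /\ forall v : 'I_(nv C), ~~ has_mk v -> valence v = 3%N.

(* passing through the conditions: points P_i, lines
   Q_j = { p | det(p, v(y_j)) = q j } (parallel to v(y_j)), j in F *)
Definition rdet (p : R * R) (u : ivec) : R := p.1 * (u.2)%:~R - p.2 * (u.1)%:~R.

Definition passes C (P : 'I_m -> R * R) (q : 'I_n -> R) : Prop :=
  (forall i, cpos C (cmk C i) = P i) /\
  (forall j, j \in F -> rdet (cpos C (cen C j)) (Delta j) = q j).

Definition mikh C (v : 'I_(nv C)) : nat :=
  match [seq u <- out_dirs v | u != (0, 0)] with
  | [:: u1; u2; _] => `|idet u1 u2|%N
  | _ => 0%N
  end.

(* Coordinates on the cell of the combinatorial type of C:
   row vectors (X | Y | l) in R^(nv + nv + nb).  Constraint matrix of the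
   face of the closure of the cell where the edges in Z have length 0:
   columns = x-equations, y-equations, (l_e = 0 for e in Z). *)
Definition CX C : 'M[R]_(nv C, nb C) :=
  \matrix_(v, e) ((v == ctgt C e)%:R - (v == csrc C e)%:R).

Definition face_mx C (Z : {set 'I_(nb C)}) : 'M[R]_(nv C + nv C + nb C, nb C + nb C + nb C) :=
  col_mx
    (col_mx (row_mx (row_mx (CX C) 0) 0) (row_mx (row_mx 0 (CX C)) 0))
    (row_mx (row_mx (diag_mx (\row_e (- ((cdir C e).1)%:~R)))
                    (diag_mx (\row_e (- ((cdir C e).2)%:~R))))
            (diag_mx (\row_e (e \in Z)%:R))).

(* linear part of ev_F : (h(x_i))_i in R^2, (det(h(y_j), v(y_j)))_(j in F) *)
Definition ev_mx C : 'M[R]_(nv C + nv C + nb C, m + m + n) :=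
  col_mx
    (col_mx
       (row_mx (row_mx (\matrix_(v, i) (v == cmk C i)%:R) 0)
               (\matrix_(v, j) (if (j \in F) && (v == cen C j)
                                then ((Delta j).2)%:~R else 0)))
       (row_mx (row_mx 0 (\matrix_(v, i) (v == cmk C i)%:R))
               (\matrix_(v, j) (if (j \in F) && (v == cen C j)
                                then - ((Delta j).1)%:~R else 0))))
    0.

(* dimension of ev_F(face) *)
Definition face_ev_dim C (Z : {set 'I_(nb C)}) : nat :=
  \rank (kermx (face_mx Z) *m ev_mx C).

Definition face_hits C (Z : {set 'I_(nb C)}) P q : Prop :=
  exists (X Y : 'I_(nv C) -> R) (l : 'I_(nb C) -> R),
    [/\ (forall e, X (ctgt C e) = X (csrc C e) + l e * ((cdir C e).1)%:~R /\
                   Y (ctgt C e) = Y (csrc C e) + l e * ((cdir C e).2)%:~R),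
        (forall e, e \in Z -> l e = 0),
        (forall e, e \notin Z -> 0 < l e),
        (forall i, (X (cmk C i), Y (cmk C i)) = P i) &
        (forall j, j \in F -> rdet (X (cen C j), Y (cen C j)) (Delta j) = q j)].

Definition full_dim : nat := (2 * m + #|F|)%N.

Definition gen_pos_refined P q : Prop :=
  forall C, is_curve C -> refined_desc C ->
  forall Z : {set 'I_(nb C)}, face_hits Z P q -> (full_dim <= face_ev_dim Z)%N.

Definition gen_pos_trop P q : Prop :=
  forall C, is_curve C -> trop_desc C ->
  face_hits (set0 : {set 'I_(nb C)}) P q -> (full_dim <= face_ev_dim (set0 : {set 'I_(nb C)}))%N.

(* finite sums over isomorphism classes: L is a list of pairwise
   non-isomorphic representatives of all curves satisfying S *)
Definition enumerates (S : curve R m n -> Prop) (L : seq (curve R m n)) : Prop :=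
  [/\ List.Forall S L,
      List.ForallOrdPairs (fun C C' => ~ curve_iso C C') L &
      forall C, S C -> exists2 C', List.In C' L & curve_iso C C'].

Definition Gcard : nat :=
  #|[set g : {perm 'I_n} | [forall i, ((i \in F) ==> (g i == i)) && (Delta (g i) == Delta i)]]|.

Definition w (j : 'I_n) : nat := iweight (Delta j).

(* rational functions in t = y^(1/2) *)
Definition K := {fraction {poly rat}}.
Definition tofracp (p : {poly rat}) : K := @FracField.tofrac _ p.
Definition tt : K := tofracp 'X.

Definition mII (a : nat) : K := (tt ^+ a - tt ^- a) / (tt - tt^-1).
Definition mIII (a : nat) : K := (tt ^+ a + tt ^- a) / (tt + tt^-1).

Definition mend (j : 'I_n) : K :=
  let wj := w j in
  if j \in F then
    (tt ^+ wj + (-1) ^+ wj * tt ^- wj) / (tt + (-1) ^+ wj * tt^-1)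
  else
    (tt ^+ wj - (-1) ^+ wj * tt ^- wj) / (wj%:R * (tt - (-1) ^+ wj * tt^-1)).

Definition mvert C (v : 'I_(nv C)) : K :=
  if has_real_mk v then 1
  else if has_cplx_mk v then mIII (mikh v)
  else mII (mikh v).

Definition mC C : K := (\prod_(j < n) mend j) * \prod_(v < nv C) mvert v.

Definition Ndesc (L : seq (curve R m n)) : K :=
  (Gcard%:R)^-1 * \sum_(C <- L) mC C.

(* value of a rational function at t = 1 (i.e. y = 1) *)
Definition value_at1 (f : K) (c : rat) : Prop :=
  exists p q : {poly rat}, [/\ q.[1] != 0, f = tofracp p / tofracp q & c = p.[1] / q.[1]].

Definition mdesc C : nat :=
  \prod_(v < nv C | ~~ has_mk v && (valence v == 3%N)) mikh v.

Definition alpha (i : nat) : nat := #|[set j in F | w j == i]|.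
Definition Ialpha : nat :=
  \prod_(1 <= i < (\max_(j < n) w j).+1) i ^ alpha i.

Definition Ntrop (L : seq (curve R m n)) : rat :=
  (Ialpha%:R)^-1 * (Gcard%:R)^-1 * \sum_(C <- L) (mdesc C)%:R.

Definition Of_prod : nat := \prod_(j in F | odd (w j)) w j.
Definition On_prod : nat := \prod_(j | (j \notin F) && odd (w j)) w j.

End Tropical.

(* At y = 1 the refined multiplicities specialize: a vertex of type (II') gives its
   Mikhalkin multiplicity, vertices of types (I') and (III') give 1, and an end of
   odd weight w gives w if it is fixed by a line condition and 1/w otherwise (even
   weights give 1).  A refined descendant curve has no contracted bounded edge,
   since stretching one would produce infinitely many non-isomorphic solutions; so
   an unmarked vertex of valence > 3 has more than three non-contracted edges and
   contributes 0.  The surviving curves, those whose unmarked vertices are all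
   trivalent, are exactly the curves of the tropical descendant count, each with
   value (prod_{O_f} w) / (prod_{O_n} w) times its tropical multiplicity. *)

From HB Require Import structures.
From mathcomp Require Import all_boot all_order all_algebra all_fingroup fraction.
From mathcomp Require Import ring zify.
From Stdlib Require Import ClassicalEpsilon.
From Stdlib Require List.
Set Implicit Arguments. Unset Strict Implicit. Unset Printing Implicit Defensive.
Import Order.TTheory GRing.Theory Num.Theory.

Lemma map_In (T : Type) (U : eqType) (f : T -> U) (L : seq T) x :
  List.In x L -> f x \in map f L.
Proof. by elim: L => //= y L IHL [->|/IHL]; rewrite inE ?eqxx // => ->; rewrite orbT. Qed.

Lemma eq_big_In (T : Type) (L : seq T) (f g : T -> nat) :
  (forall x, List.In x L -> f x = g x) -> \sum_(x <- L) f x = \sum_(x <- L) g x.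
Proof.
elim: L => [|x L IHL] fg; first by rewrite !big_nil.
by rewrite !big_cons fg /=; [rewrite IHL // => y Ly; apply: fg; right | left].
Qed.

Section DoubleCounting.
Variables (T : Type) (equiv : T -> T -> Prop).
Hypothesis equiv_sym : forall x y, equiv x y -> equiv y x.
Hypothesis equiv_trans : forall x y z, equiv x y -> equiv y z -> equiv x z.

Definition equivb x y : bool := if excluded_middle_informative (equiv x y) then true else false.

Lemma equivbP x y : reflect (equiv x y) (equivb x y).
Proof. by rewrite /equivb; case: excluded_middle_informative => h; constructor. Qed.

Lemma sum_equivb_eq0 x (L : seq T) :
  List.Forall (fun y => ~ equiv x y) L -> \sum_(y <- L) equivb x y = 0.
Proof.
elim: L => [|y L IHL] xL; first by rewrite big_nil.
inversion xL as [|? ? xNy xL']; subst.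
by rewrite big_cons IHL //; case: equivbP.
Qed.

Lemma sum_equivb_eq1 x (L : seq T) :
  List.ForallOrdPairs (fun y z => ~ equiv y z) L ->
  (exists2 y, List.In y L & equiv x y) -> \sum_(y <- L) equivb x y = 1.
Proof.
elim: L => [|y0 L IHL] Lineq [y Ly xy]; first by case: Ly.
inversion Lineq as [|? ? y0_ineq L_ineq]; subst; rewrite big_cons.
case: equivbP => [xy0|xNy0].
  rewrite sum_equivb_eq0 //; apply: List.Forall_impl y0_ineq => z y0Nz xz.
  by apply: y0Nz; apply: equiv_trans (equiv_sym xy0) xz.
by case: Ly => [y0y|Ly]; [subst|rewrite IHL //; exists y].
Qed.

(* Both sides equal the sum of [u x * f x * equivb x y] over pairs. *)
Lemma sum_over_representatives (L1 L2 : seq T) (u : T -> bool) (f : T -> nat) :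
  List.ForallOrdPairs (fun x y => ~ equiv x y) L1 ->
  List.ForallOrdPairs (fun x y => ~ equiv x y) L2 ->
  (forall x, List.In x L1 -> u x -> exists2 y, List.In y L2 & equiv x y) ->
  (forall y, List.In y L2 -> exists2 x, List.In x L1 & equiv y x) ->
  (forall x y, List.In x L1 -> List.In y L2 -> equiv x y -> u x /\ f x = f y) ->
  \sum_(x <- L1) u x * f x = \sum_(y <- L2) f y.
Proof.
move=> L1ineq L2ineq L1L2 L2L1 equiv_uf.
transitivity (\sum_(x <- L1) \sum_(y <- L2) u x * f x * equivb x y).
  apply: eq_big_In => x L1x; rewrite -big_distrr /=.
  by case ux: (u x); rewrite ?mul0n // sum_equivb_eq1 ?muln1 //; apply: L1L2.
rewrite exchange_big /=; apply: eq_big_In => y L2y.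
transitivity (\sum_(x <- L1) f y * equivb y x).
  apply: eq_big_In => x L1x.
  case: (equivbP x y) => xy; case: (equivbP y x) => yx; rewrite ?muln0 //.
  - by have [-> ->] := equiv_uf _ _ L1x L2y xy; rewrite !muln1 mul1n.
  - by case: yx; apply: equiv_sym.
  - by case: xy; apply: equiv_sym.
by rewrite -big_distrr /= sum_equivb_eq1 ?muln1 //; apply: L2L1.
Qed.

End DoubleCounting.

Lemma card_set_sum (T : finType) (P : pred T) : #|[set x | P x]| = \sum_(x : T) P x.
Proof. by rewrite -sum1dep_card big_mkcond /=; apply: eq_bigr => x _; case: (P x). Qed.

Lemma count_map_enum (T : finType) (P : pred T) (A : Type) (f : T -> A) (a : pred A) :
  count a [seq f x | x <- enum T & P x] = \sum_(x : T) (P x && a (f x)).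
Proof.
rewrite count_map count_filter -sum1_count big_enum_cond big_mkcond /=.
by apply: eq_bigr => x _; rewrite /= andbC; case: (_ && _).
Qed.

Definition mikh_seq (l : seq ivec) : nat :=
  if l is [:: u1; u2; _] then `|idet u1 u2|%N else 0.

Lemma mikh_seq_size (l : seq ivec) : size l != 3 -> mikh_seq l = 0.
Proof. by case: l => [|a [|b [|c [|d t]]]]. Qed.

Lemma vsum_nonzero (l : seq ivec) : vsum [seq u <- l | u != (0, 0)%R] = vsum l.
Proof.
elim: l => [//|x l IHl] /=; case: eqP => [->|_] /=; rewrite IHl //.
by case: (vsum l) => a b /=; rewrite !add0r.
Qed.

Definition det_sum (l : seq ivec) : nat := \sum_(u <- l) \sum_(v <- l) `|idet u v|%N.

Lemma det_sum_perm (l l' : seq ivec) : perm_eq l l' -> det_sum l = det_sum l'.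
Proof. by move=> ll'; rewrite /det_sum (perm_big _ ll'); apply: eq_bigr => u _; apply: perm_big. Qed.

Lemma det_sum_balanced3 a b c :
  vsum [:: a; b; c] = (0, 0)%R -> det_sum [:: a; b; c] = 6 * `|idet a b|%N.
Proof.
case: a b c => [a1 a2] [b1 b2] [c1 c2] /= [sum1 sum2].
have -> : c1 = (- (a1 + b1))%R by apply/eqP; rewrite -subr_eq0 -sum1; apply/eqP; ring.
have -> : c2 = (- (a2 + b2))%R by apply/eqP; rewrite -subr_eq0 -sum2; apply/eqP; ring.
rewrite /det_sum !big_cons !big_nil /idet /=.
set x := (a1 * b2 - a2 * b1)%R.
have e1 : (a1 * a2 - a2 * a1)%R = 0%R by ring.
have e2 : (b1 * b2 - b2 * b1)%R = 0%R by ring.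
have e3 : ((- (a1 + b1)) * (- (a2 + b2)) - (- (a2 + b2)) * (- (a1 + b1)))%R = 0%R by ring.
have e4 : (b1 * a2 - b2 * a1)%R = (- x)%R by rewrite /x; ring.
have e5 : (a1 * (- (a2 + b2)) - a2 * (- (a1 + b1)))%R = (- x)%R by rewrite /x; ring.
have e6 : ((- (a1 + b1)) * a2 - (- (a2 + b2)) * a1)%R = x by rewrite /x; ring.
have e7 : (b1 * (- (a2 + b2)) - b2 * (- (a1 + b1)))%R = x by rewrite /x; ring.
have e8 : ((- (a1 + b1)) * b2 - (- (a2 + b2)) * b1)%R = (- x)%R by rewrite /x; ring.
by rewrite e1 e2 e3 e4 e5 e6 e7 e8 !abszN absz0; lia.
Qed.

(* [mikh_seq] singles out the first two vectors; for a balanced triple it is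
   det_sum / 6, which is manifestly invariant under permutation. *)
Lemma mikh_seq_perm (l l' : seq ivec) : perm_eq l l' ->
  vsum l = (0, 0)%R -> vsum l' = (0, 0)%R -> mikh_seq l = mikh_seq l'.
Proof.
move=> ll' bal bal'; have size_l' := perm_size ll'.
have [size3|sizeN3] := eqVneq (size l) 3; last by rewrite !mikh_seq_size // -size_l'.
have := det_sum_perm ll'; move: ll' bal bal' size_l' size3.
case: l => [|a [|b [|c [|]]]] //; case: l' => [|x [|y [|z [|]]]] //= _ bal bal' _ _.
by rewrite (det_sum_balanced3 bal) (det_sum_balanced3 bal'); lia.
Qed.

Section Curves.
Variables (R : realFieldType) (r s n : nat) (Delta : 'I_n -> ivec).
Local Notation curve := (curve R (r + s) n).

Lemma curve_iso_sym (C C' : curve) : curve_iso C C' -> curve_iso C' C.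
Proof.
move=> [sg [tau [[[sgi sgK sgKV] [taui tauK tauKV]] pos_sg mk_sg en_sg edge_tau]]].
exists sgi, taui; split.
- by split; [exists sg|exists tau].
- by move=> v; rewrite -{2}(sgKV v) pos_sg.
- by move=> i; rewrite mk_sg sgK.
- by move=> j; rewrite en_sg sgK.
move=> e; have [len_e dir_e] := edge_tau (taui e); rewrite tauKV in len_e dir_e.
split=> //; case: dir_e => [[-> [-> ->]]|[-> [-> ->]]]; rewrite !sgK; first by left.
by right; case: (cdir C (taui e)) => a b /=; rewrite !opprK.
Qed.

Lemma curve_iso_trans (C1 C2 C3 : curve) :
  curve_iso C1 C2 -> curve_iso C2 C3 -> curve_iso C1 C3.
Proof.
move=> [sg [tau [[sg_bij tau_bij] pos_sg mk_sg en_sg edge_tau]]].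
move=> [sg' [tau' [[sg'_bij tau'_bij] pos_sg' mk_sg' en_sg' edge_tau']]].
exists (sg' \o sg), (tau' \o tau); split.
- by split; apply: bij_comp.
- by move=> v /=; rewrite pos_sg' pos_sg.
- by move=> i /=; rewrite mk_sg' mk_sg.
- by move=> j /=; rewrite en_sg' en_sg.
move=> e /=; have [len_e dir_e] := edge_tau e; have [len_e' dir_e'] := edge_tau' (tau e).
split; first by rewrite len_e' len_e.
case: dir_e' => [[-> [-> ->]]|[-> [-> ->]]]; case: dir_e => [[-> [-> ->]]|[-> [-> ->]]].
- by left.
- by right.
- by right.
by left; case: (cdir C1 e) => a b /=; rewrite !opprK.
Qed.

Definition incidence (C : curve) (v : 'I_(nv C)) (e : 'I_(nb C)) : nat :=
  (csrc C e == v) + (ctgt C e == v).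

Lemma valenceE (C : curve) (v : 'I_(nv C)) : valence v =
  \sum_e incidence v e + #|[set j | cen C j == v]| + #|[set i | cmk C i == v]|.
Proof. by rewrite /valence !card_set_sum -big_split. Qed.

Definition out_count (C : curve) (v : 'I_(nv C)) (a : pred ivec) (e : 'I_(nb C)) : nat :=
  ((csrc C e == v) && a (cdir C e))
  + ((ctgt C e == v) && a ((- (cdir C e).1)%R, (- (cdir C e).2)%R)).

Lemma count_out_dirs (C : curve) (v : 'I_(nv C)) (a : pred ivec) :
  count a (out_dirs Delta v) =
  \sum_e out_count v a e + \sum_j ((cen C j == v) && a (Delta j)).
Proof. by rewrite /out_dirs !count_cat !count_map_enum addnA -big_split. Qed.

Lemma size_out_dirs (C : curve) (v : 'I_(nv C)) :
  size (out_dirs Delta v) = valence v - #|[set i | cmk C i == v]|.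
Proof.
rewrite -count_predT count_out_dirs valenceE addnK card_set_sum.
by congr (_ + _); apply: eq_bigr => ? _; rewrite /out_count /= !andbT.
Qed.

Definition unmarked_trivalent (C : curve) : bool :=
  [forall v : 'I_(nv C), has_mk v || (valence v == 3)].

Section IsoInvariants.
Variables (C C' : curve) (sg : 'I_(nv C) -> 'I_(nv C')) (tau : 'I_(nb C) -> 'I_(nb C')).
Hypotheses (sg_bij : bijective sg) (tau_bij : bijective tau).
Hypotheses (mk_sg : forall i, cmk C' i = sg (cmk C i))
  (en_sg : forall j, cen C' j = sg (cen C j))
  (edge_tau : forall e, clen C' (tau e) = clen C e /\
     ((csrc C' (tau e) = sg (csrc C e) /\ ctgt C' (tau e) = sg (ctgt C e)
       /\ cdir C' (tau e) = cdir C e) \/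
      (csrc C' (tau e) = sg (ctgt C e) /\ ctgt C' (tau e) = sg (csrc C e)
       /\ cdir C' (tau e) = ((- (cdir C e).1)%R, (- (cdir C e).2)%R)))).

Let sg_inj := bij_inj sg_bij.

Lemma total_length_iso : (\sum_e clen C' e = \sum_e clen C e)%R.
Proof. by rewrite (reindex tau (onW_bij _ tau_bij)); apply: eq_bigr => e _; case: (edge_tau e). Qed.

Lemma has_mk_iso v : has_mk (sg v) = has_mk v.
Proof. by apply/existsP/existsP => -[i mk_i]; exists i; rewrite mk_sg (inj_eq sg_inj) in mk_i *. Qed.

Lemma valence_iso v : valence (sg v) = valence v.
Proof.
rewrite !valenceE; congr (_ + _ + _).
- rewrite (reindex tau (onW_bij _ tau_bij)); apply: eq_bigr => e _.
  rewrite /incidence; have [_ [[-> [-> _]]|[-> [-> _]]]] := edge_tau e.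
    by rewrite !(inj_eq sg_inj).
  by rewrite !(inj_eq sg_inj) addnC.
- by rewrite !card_set_sum; apply: eq_bigr => j _; rewrite en_sg (inj_eq sg_inj).
- by rewrite !card_set_sum; apply: eq_bigr => i _; rewrite mk_sg (inj_eq sg_inj).
Qed.

Lemma out_dirs_iso v : perm_eq (out_dirs Delta (sg v)) (out_dirs Delta v).
Proof.
apply/seq.permP => a; rewrite !count_out_dirs; congr (_ + _).
  rewrite (reindex tau (onW_bij _ tau_bij)); apply: eq_bigr => e _.
  rewrite /out_count; have [_ [[-> [-> ->]]|[-> [-> ->]]]] := edge_tau e.
    by rewrite !(inj_eq sg_inj).
  rewrite !(inj_eq sg_inj) addnC /=.
  by case: (cdir C e) => x y /=; rewrite !opprK.
by apply: eq_bigr => j _; rewrite en_sg (inj_eq sg_inj).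
Qed.

Lemma mdesc_iso : is_curve Delta C -> is_curve Delta C' -> mdesc Delta C' = mdesc Delta C.
Proof.
case=> _ _ _ bal _ [_ _ _ bal' _]; rewrite /mdesc (reindex sg (onW_bij _ sg_bij)) /=.
apply: eq_big => [v|v _]; first by rewrite has_mk_iso valence_iso.
apply: mikh_seq_perm; first by apply: perm_filter; exact: out_dirs_iso.
  by rewrite vsum_nonzero bal'.
by rewrite vsum_nonzero bal.
Qed.

Lemma unmarked_trivalent_iso : unmarked_trivalent C' = unmarked_trivalent C.
Proof.
have [sgi _ sgKV] := sg_bij.
apply/forallP/forallP => triv v; last by rewrite -(sgKV v) has_mk_iso valence_iso.
by have := triv (sg v); rewrite has_mk_iso valence_iso.
Qed.

End IsoInvariants.

Lemma total_length_curve_iso (C C' : curve) :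
  curve_iso C C' -> (\sum_e clen C' e = \sum_e clen C e)%R.
Proof.
by move=> [sg [tau [[_ tau_bij] _ _ _ edge_tau]]]; exact: (total_length_iso tau_bij edge_tau).
Qed.

Lemma mdesc_curve_iso (C C' : curve) : curve_iso C C' ->
  is_curve Delta C -> is_curve Delta C' -> mdesc Delta C' = mdesc Delta C.
Proof.
move=> [sg [tau [[sg_bij tau_bij] _ mk_sg en_sg edge_tau]]].
exact: (mdesc_iso sg_bij tau_bij mk_sg en_sg edge_tau).
Qed.

Lemma unmarked_trivalent_curve_iso (C C' : curve) :
  curve_iso C C' -> unmarked_trivalent C' = unmarked_trivalent C.
Proof.
move=> [sg [tau [[sg_bij tau_bij] _ mk_sg en_sg edge_tau]]].
exact: (unmarked_trivalent_iso sg_bij tau_bij mk_sg en_sg edge_tau).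
Qed.

Definition stretch (C : curve) (e0 : 'I_(nb C)) (k : nat) : curve :=
  @Curve R (r + s) n (nv C) (nb C) (csrc C) (ctgt C) (cdir C)
    (fun e => clen C e + (e == e0)%:R * k%:R)%R (cpos C) (cmk C) (cen C).
Arguments stretch : clear implicits.

Lemma stretch_is_curve (C : curve) e0 k :
  cdir C e0 = (0, 0)%R -> is_curve Delta C -> is_curve Delta (stretch C e0 k).
Proof.
move=> dir0 [tree len_gt0 pos_edge bal val_ge3]; split=> // e /=.
  by apply: ltr_wpDr (len_gt0 e); rewrite mulr_ge0 ?ler0n.
rewrite pos_edge; case: (eqVneq e e0) => [->|_]; first by rewrite dir0 /= !mulr0.
by rewrite mul0r addr0.
Qed.

Lemma total_length_stretch (C : curve) e0 k :
  (\sum_e clen (stretch C e0 k) e = \sum_e clen C e + k%:R)%R.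
Proof.
rewrite big_split /=; congr (_ + _)%R.
by rewrite (bigD1 e0) //= eqxx mul1r big1 ?addr0 // => e /negbTE ->; rewrite mul0r.
Qed.

(* Stretching a contracted edge by k = 0, ..., |L| gives |L| + 1 solutions of
   distinct total lengths, an isomorphism invariant, so L cannot represent them all. *)
Lemma enumerated_nonzero_dir (S : curve -> Prop) (L : seq curve) :
  (forall C e0 k, cdir C e0 = (0, 0)%R -> S C -> S (stretch C e0 k)) ->
  enumerates S L -> forall C, List.In C L -> forall e, cdir C e != (0, 0)%R.
Proof.
move=> S_stretch [SL _ L_cover] C LC e0; apply/negP => /eqP dir0.
have SC : S C by move: SL; rewrite List.Forall_forall; apply.
pose lengths := [seq (\sum_e clen C e + k%:R)%R | k <- iota 0 (size L).+1].
have lengths_uniq : uniq lengths.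
  by rewrite map_inj_uniq ?iota_uniq // => k k' /addrI /eqP; rewrite eqr_nat => /eqP.
have : {subset lengths <= [seq (\sum_e clen D e)%R | D <- L]}.
  move=> _ /mapP [k _ ->].
  have [D LD CD] := L_cover _ (S_stretch C e0 k dir0 SC).
  rewrite -(total_length_stretch e0 k) -(total_length_curve_iso CD).
  exact: map_In.
by move/(uniq_leq_size lengths_uniq); rewrite !size_map size_iota ltnn.
Qed.

Lemma mikh_unmarked_nontrivalent (C : curve) (v : 'I_(nv C)) :
  (forall e, cdir C e != (0, 0)%R) -> (forall j, Delta j != (0, 0)%R) ->
  ~~ has_mk v -> valence v != 3 -> mikh Delta v = 0.
Proof.
move=> dir_neq0 Delta_neq0 unmarked val_neq3; apply: mikh_seq_size.
have -> : [seq u <- out_dirs Delta v | u != (0, 0)%R] = out_dirs Delta v.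
  apply/all_filterP/allP => u; rewrite !mem_cat => /or3P [] /mapP [x _ ->] //.
  by move: (dir_neq0 x); case: (cdir C x) => a b; rewrite !xpair_eqE !oppr_eq0.
rewrite size_out_dirs; suff -> : #|[set i | cmk C i == v]| = 0 by rewrite subn0.
apply/eqP; rewrite cards_eq0; apply/eqP/setP => i; rewrite !inE.
by apply/negP => mk_i; move/existsP: unmarked; apply; exists i.
Qed.

End Curves.

Local Open Scope ring_scope.

Lemma tofracp_neq0 (p : {poly rat}) (c : rat) : p.[c] != 0 -> tofracp p != 0.
Proof. by move=> pc; rewrite /tofracp tofrac_eq0; apply: contra pc => /eqP ->; rewrite horner0. Qed.

Lemma value_at1_poly (p : {poly rat}) : value_at1 (tofracp p) p.[1].
Proof.
exists p, 1; split; first by rewrite hornerC oner_neq0.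
  by rewrite /tofracp rmorph1 divr1.
by rewrite hornerC divr1.
Qed.

Lemma value_at1D f g c d : value_at1 f c -> value_at1 g d -> value_at1 (f + g) (c + d).
Proof.
move=> [p [q [q1 -> ->]]] [p' [q' [q'1 -> ->]]].
exists (p * q' + p' * q), (q * q'); split; first by rewrite hornerM mulf_neq0.
  have qK := tofracp_neq0 q1; have q'K := tofracp_neq0 q'1.
  rewrite /tofracp in qK q'K *.
  rewrite (addf_div _ _ qK q'K) tofracD !tofracM; reflexivity.
rewrite hornerD !hornerM (addf_div _ _ q1 q'1); reflexivity.
Qed.

Lemma value_at1M f g c d : value_at1 f c -> value_at1 g d -> value_at1 (f * g) (c * d).
Proof.
move=> [p [q [q1 -> ->]]] [p' [q' [q'1 -> ->]]].
exists (p * p'), (q * q'); split; first by rewrite hornerM mulf_neq0.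
  rewrite mulf_div /tofracp !tofracM; reflexivity.
rewrite mulf_div !hornerM; reflexivity.
Qed.

Lemma value_at1V f c : value_at1 f c -> c != 0 -> value_at1 f^-1 c^-1.
Proof.
move=> [p [q [q1 -> ->]]] c_neq0.
have p1 : p.[1] != 0 by apply: contra c_neq0 => /eqP ->; rewrite mul0r.
by exists q, p; split; rewrite // invf_div.
Qed.

Lemma value_at1_nat k : value_at1 k%:R k%:R.
Proof. by have := value_at1_poly k%:R%:P; rewrite hornerC /tofracp polyC_natr rmorph_nat. Qed.

Lemma value_at1_1 : value_at1 1 1.
Proof. exact: value_at1_nat 1. Qed.

Lemma value_at1X f c k : value_at1 f c -> value_at1 (f ^+ k) (c ^+ k).
Proof.
move=> fc; elim: k => [|k IHk]; first by rewrite !expr0; exact: value_at1_1.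
by rewrite !exprS; exact: value_at1M.
Qed.

Lemma value_at1_sum (I : Type) (L : seq I) (f : I -> K) (c : I -> rat) :
  (forall i, List.In i L -> value_at1 (f i) (c i)) ->
  value_at1 (\sum_(i <- L) f i) (\sum_(i <- L) c i).
Proof.
elim: L => [|x L IHL] fc; first by rewrite !big_nil; exact: value_at1_nat 0.
rewrite !big_cons; apply: value_at1D; first by apply: fc; left.
by apply: IHL => i Li; apply: fc; right.
Qed.

Lemma value_at1_prod (I : Type) (L : seq I) (f : I -> K) (c : I -> rat) :
  (forall i, value_at1 (f i) (c i)) ->
  value_at1 (\prod_(i <- L) f i) (\prod_(i <- L) c i).
Proof.
move=> fc; apply: (big_ind2 value_at1) => //; first exact: value_at1_1.
by move=> *; exact: value_at1M.
Qed.

Lemma value_at1_tt : value_at1 tt 1.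
Proof. by have := value_at1_poly 'X; rewrite hornerX. Qed.

Lemma value_at1_ttX k : value_at1 (tt ^+ k) 1.
Proof. by rewrite -(expr1n _ k); apply: value_at1X; exact: value_at1_tt. Qed.

Lemma value_at1_ttXV k : value_at1 (tt ^- k) 1.
Proof. by rewrite -invr1; apply: value_at1V; [exact: value_at1_ttX|exact: oner_neq0]. Qed.

Lemma value_at1_mIII a : value_at1 (mIII a) 1.
Proof.
rewrite -(mulfV (_ : 2%:R != 0 :> rat)) //; apply: value_at1M.
  by apply: (value_at1D (value_at1_ttX a) (value_at1_ttXV a)).
apply: value_at1V => //.
by rewrite -[tt^-1]expr1; apply: (value_at1D value_at1_tt (value_at1_ttXV 1)).
Qed.

Lemma tt_neq0 : tt != 0.
Proof. by apply: (@tofracp_neq0 _ 1); rewrite hornerX. Qed.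

(* Writing x^a - x^-a = (x^(2a) - 1) / x^a cancels the factor x^2 - 1 of the
   denominator, leaving a sum of a powers of x^2. *)
Lemma geometric_ratio (L : fieldType) (x : L) (a : nat) : x != 0 -> x ^+ 2 - 1 != 0 ->
  (x ^+ a - x ^- a) / (x - x^-1) = (\sum_(i < a) (x ^+ 2) ^+ i) * x / x ^+ a.
Proof.
move=> x_neq0 x2_neq1; have xa_neq0 : x ^+ a != 0 by rewrite expf_neq0.
have -> : x ^+ a - x ^- a = (x ^+ 2 - 1) * (\sum_(i < a) (x ^+ 2) ^+ i) / x ^+ a.
  by rewrite -subrX1 -exprM mulnC exprM expr2 mulrBl mulfK // div1r.
have -> : x - x^-1 = (x ^+ 2 - 1) / x by rewrite mulrBl expr2 mulfK // div1r.
by field; rewrite x2_neq1 xa_neq0 x_neq0.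
Qed.

Lemma mII_geometric a : mII a = (\sum_(i < a) (tt ^+ 2) ^+ i) * tt / tt ^+ a.
Proof.
apply: geometric_ratio; first exact: tt_neq0.
have -> : tt ^+ 2 - 1 = tofracp ('X * 'X - 1).
  rewrite expr2 /tofracp tofracB tofracM tofrac1; reflexivity.
by apply: (@tofracp_neq0 _ 0); rewrite !hornerE oppr_eq0 oner_eq0.
Qed.

Lemma value_at1_mII a : value_at1 (mII a) a%:R.
Proof.
rewrite mII_geometric -[a%:R]mulr1 -[a%:R * 1]mulr1 -invr1.
apply: value_at1M; last by apply: value_at1V; [exact: value_at1_ttX|exact: oner_neq0].
apply: value_at1M; last exact: value_at1_tt.
have -> : a%:R = \sum_(i < a) (1 : rat) by rewrite sumr_const card_ord.
by apply: value_at1_sum => i _; rewrite -(expr1n _ i); apply: value_at1X; exact: value_at1_ttX.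
Qed.

Lemma iweight_gt0 (u : ivec) : u != (0, 0) -> (0 < iweight u)%N.
Proof.
rewrite /iweight gcdn_gt0 !absz_gt0; case: u => a b /=.
by apply: contraR; rewrite negb_or !negbK => /andP [/eqP -> /eqP ->].
Qed.

Section EndFactors.
Variables (n : nat) (Delta : 'I_n -> ivec) (F : {set 'I_n}).
Local Notation w := (w Delta).

Definition end_value (j : 'I_n) : rat :=
  if ~~ odd (w j) then 1 else if j \in F then (w j)%:R else (w j)%:R^-1.

Lemma value_at1_mend j : Delta j != (0, 0) -> value_at1 (mend Delta F j) (end_value j).
Proof.
move=> Dj_neq0; have w_neq0 : (w j)%:R != 0 :> rat by rewrite pnatr_eq0 -lt0n iweight_gt0.
have sign : (-1 : K) ^+ w j = if odd (w j) then -1 else 1 by rewrite -signr_odd; case: odd.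
rewrite /mend /end_value sign; case: (j \in F); case: (odd (w j)) => /=.
- rewrite !mulN1r; exact: value_at1_mII.
- rewrite !mul1r; exact: value_at1_mIII.
- rewrite !mulN1r !opprK invfM mulrCA mulrC -[(w j)%:R^-1]mul1r.
  by apply: value_at1M; [exact: value_at1_mIII|apply: value_at1V; first exact: value_at1_nat].
- rewrite !mul1r invfM mulrCA mulrC -(mulfV w_neq0).
  by apply: value_at1M; [exact: value_at1_mII|apply: value_at1V; first exact: value_at1_nat].
Qed.

Lemma prod_end_value : \prod_(j < n) end_value j = (Of_prod Delta F)%:R / (On_prod Delta F)%:R.
Proof.
rewrite (bigID (mem F)) /= /Of_prod /On_prod !natr_prod -prodfV.
congr (_ * _); rewrite big_mkcondr; apply: eq_bigr => j /=.
  by rewrite /end_value => ->; case: odd.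
by rewrite /end_value => /negbTE ->; case: odd.
Qed.

End EndFactors.

Section Multiplicities.
Variables (R : realFieldType) (r s n : nat) (Delta : 'I_n -> ivec) (F : {set 'I_n}).
Hypothesis Delta_neq0 : forall j, Delta j != (0, 0).
Local Notation curve := (curve R (r + s) n).

Lemma has_mkE (C : curve) (v : 'I_(nv C)) : has_mk v = has_real_mk v || has_cplx_mk v.
Proof.
apply/existsP/orP => [[i mk_i]|[]/existsP[i /andP[_ mk_i]]]; try by exists i.
by case real_i: (is_real_mk i); [left|right]; apply/existsP; exists i; rewrite real_i.
Qed.

Definition vertex_value (C : curve) (v : 'I_(nv C)) : rat :=
  if has_mk v then 1 else (mikh Delta v)%:R.

Lemma value_at1_mvert (C : curve) (v : 'I_(nv C)) : value_at1 (mvert Delta v) (vertex_value v).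
Proof.
rewrite /mvert /vertex_value has_mkE.
case: (has_real_mk v) => /=; first exact: value_at1_1.
by case: (has_cplx_mk v) => /=; [exact: value_at1_mIII|exact: value_at1_mII].
Qed.

Lemma prod_vertex_value (C : curve) : (forall e, cdir C e != (0, 0)) ->
  \prod_(v < nv C) vertex_value v = (unmarked_trivalent C * mdesc Delta C)%N%:R.
Proof.
move=> dir_neq0; case triv: (unmarked_trivalent C).
  rewrite mul1n /mdesc natr_prod [RHS]big_mkcond /=; apply: eq_bigr => v _.
  rewrite /vertex_value; case: ifP => //= unmarked.
  by have := forallP triv v; rewrite unmarked /= => ->.
move/negbT: triv; rewrite negb_forall => /existsP [v]; rewrite negb_or => /andP [unmarked val_neq3].
rewrite (bigD1 v) //= /vertex_value (negbTE unmarked).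
by rewrite (mikh_unmarked_nontrivalent dir_neq0 Delta_neq0 unmarked val_neq3) mul0r.
Qed.

Lemma value_at1_mC (C : curve) : (forall e, cdir C e != (0, 0)) ->
  value_at1 (mC Delta F C) ((Of_prod Delta F)%:R / (On_prod Delta F)%:R
                            * (unmarked_trivalent C * mdesc Delta C)%N%:R).
Proof.
move=> dir_neq0; rewrite -prod_end_value -prod_vertex_value //.
apply: value_at1M; apply: value_at1_prod => x; first exact: value_at1_mend.
exact: value_at1_mvert.
Qed.

End Multiplicities.

Lemma Gcard_gt0 (n : nat) (Delta : 'I_n -> ivec) (F : {set 'I_n}) : (0 < Gcard Delta F)%N.
Proof. by apply/card_gt0P; exists 1%g; rewrite inE; apply/forallP => i; rewrite perm1 !eqxx implybT. Qed.

Lemma Ialpha_gt0 (n : nat) (Delta : 'I_n -> ivec) (F : {set 'I_n}) : (0 < Ialpha Delta F)%N.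
Proof.
rewrite /Ialpha big_seq_cond; apply: prodn_cond_gt0 => i /andP [+ _].
by rewrite mem_index_iota expn_gt0 => /andP [->].
Qed.

Section Counting.
Variables (R : realFieldType) (r s n : nat) (Delta : 'I_n -> ivec) (F : {set 'I_n}).
Variables (P : 'I_(r + s) -> R * R) (q : 'I_n -> R) (L1 L2 : seq (curve R (r + s) n)).
Hypothesis HL1 : enumerates (fun C => [/\ is_curve Delta C, refined_desc C
                                        & passes Delta F C P q]) L1.
Hypothesis HL2 : enumerates (fun C => [/\ is_curve Delta C, trop_desc C
                                        & passes Delta F C P q]) L2.

Lemma refined_nonzero_dir C : List.In C L1 -> forall e, cdir C e != (0, 0).
Proof.
apply: (enumerated_nonzero_dir _ HL1) => C' e0 k dir0 [C'_curve C'_refined C'_passes].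
by split=> //; exact: stretch_is_curve.
Qed.

Lemma sum_mdesc_refined :
  (\sum_(C <- L1) unmarked_trivalent C * mdesc Delta C = \sum_(D <- L2) mdesc Delta D)%N.
Proof.
have [L1_sat L1_ineq L1_cover] := HL1; have [L2_sat L2_ineq L2_cover] := HL2.
have sat1 C : List.In C L1 -> [/\ is_curve Delta C, refined_desc C & passes Delta F C P q].
  by move: C; apply/List.Forall_forall.
have sat2 D : List.In D L2 -> [/\ is_curve Delta D, trop_desc D & passes Delta F D P q].
  by move: D; apply/List.Forall_forall.
apply: (sum_over_representatives (@curve_iso_sym _ _ _ _) (@curve_iso_trans _ _ _ _)) => //.
- move=> C L1C triv; apply: L2_cover; have [C_curve C_refined C_passes] := sat1 C L1C.
  split=> //; split=> // v unmarked.
  by have := forallP triv v; rewrite (negbTE unmarked) => /eqP.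
- by move=> D L2D; apply: L1_cover; have [? [? _] ?] := sat2 D L2D.
move=> C D L1C L2D CD; have [C_curve _ _] := sat1 C L1C.
have [D_curve [_ D_trivalent] _] := sat2 D L2D.
split; last by rewrite (mdesc_curve_iso CD).
rewrite -(unmarked_trivalent_curve_iso CD); apply/forallP => v.
by case: (boolP (has_mk v)) => //= unmarked; rewrite D_trivalent.
Qed.

End Counting.

Theorem lemma3p25 (R : realFieldType) (r s n : nat) (Delta : 'I_n -> ivec)
    (F : {set 'I_n})
    (HDelta : forall j, Delta j != (0, 0))
    (Hdim : (r + 2 * s + #|F| + 1)%N = n)
    (P : 'I_(r + s) -> R * R) (q : 'I_n -> R)
    (Hgp1 : gen_pos_refined Delta F P q)
    (Hgp2 : gen_pos_trop Delta F P q)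
    (L1 L2 : seq (curve R (r + s) n))
    (HL1 : enumerates (fun C => [/\ is_curve Delta C, refined_desc C
                                    & passes Delta F C P q]) L1)
    (HL2 : enumerates (fun C => [/\ is_curve Delta C, trop_desc C
                                    & passes Delta F C P q]) L2) :
  value_at1 (Ndesc Delta F L1)
    ((Of_prod Delta F)%:R / (On_prod Delta F)%:R * (Ialpha Delta F)%:R
     * Ntrop Delta F L2).
Proof.
set ends := (Of_prod Delta F)%:R / (On_prod Delta F)%:R.
have G_neq0 : (Gcard Delta F)%:R != 0 :> rat by rewrite pnatr_eq0 -lt0n Gcard_gt0.
have I_neq0 : (Ialpha Delta F)%:R != 0 :> rat by rewrite pnatr_eq0 -lt0n Ialpha_gt0.
have value_sum : value_at1 (\sum_(C <- L1) mC Delta F C)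
    (ends * (\sum_(C <- L1) unmarked_trivalent C * mdesc Delta C)%N%:R).
  rewrite natr_sum big_distrr; apply: value_at1_sum => C L1C.
  exact: (value_at1_mC F HDelta (refined_nonzero_dir HL1 L1C)).
have := value_at1M (value_at1V (value_at1_nat (Gcard Delta F)) G_neq0) value_sum.
rewrite (sum_mdesc_refined HL1 HL2) natr_sum.
suff -> : ends * (Ialpha Delta F)%:R * Ntrop Delta F L2 =
          (Gcard Delta F)%:R^-1 * (ends * \sum_(D <- L2) (mdesc Delta D)%:R) by [].
by rewrite /Ntrop; field; rewrite G_neq0 I_neq0.
Qed.
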